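(* Let $C$ be a completely transitive code in $H(m,2)$ with $\mathbf 0\in C$ and minimum distance $\delta\in\{5,6\}$. Then the set of all codewords of weight $\delta$ forms the block set of a $t$-$(m,\delta,\lambda)$ design, where either 1. $\delta=5$, $t=2$ and $\lambda\le (m-2)/3$; or 2. $\delta=6$, $t=3$ and $\lambda\le (m-3)/3$.
   Context: $H(m,2)$: vertex set $\mathbb F_2^m$ with coordinates indexed by a set $M$ of size $m$; vertices are identified with their supports (subsets of $M$), and the weight of a vertex is the size of its support. For a code $C$: covering radius $\rho=\max_\alpha d(\alpha,C)$, $C_i=\{\alpha:d(\alpha,C)=i\}$. $\mathrm{Aut}(C)$ is the setwise stabiliser of $C$ in the automorphism group of $H(m,2)$ (translations together with coordinate permutations); $C$ is completely transitive if $\mathrm{Aut}(C)$ is transitive on each of $C,C_1,\dots,C_\rho$. A $t$-$(m,k,\lambda)$ design is a collection of $k$-subsets (blocks) of an $m$-set such that every $t$-subset lies in exactly $\lambda$ blocks. *)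

(* Vertices of H(m,2) are identified with their supports:
   subsets of the coordinate set 'I_m. *)
From mathcomp Require Import all_boot all_fingroup.
Set Implicit Arguments. Unset Strict Implicit. Unset Printing Implicit Defensive.

Section Hamming.
Variable m : nat.
Notation vtx := {set 'I_m}.

(* symmetric difference = vector addition in F_2^m *)
Definition symdiff (x y : vtx) : vtx := (x :\: y) :|: (y :\: x).

Definition hdist (x y : vtx) : nat := #|symdiff x y|.

Definition weight (x : vtx) : nat := #|x|.

(* d(alpha, C) for a nonempty code C (distances are <= m, so m is a neutral
   default for the minimum) *)
Definition dist_code (C : {set vtx}) (a : vtx) : nat :=
  \big[minn/m]_(c in C) hdist a c.

Definition cov_radius (C : {set vtx}) : nat :=
  \max_(a : vtx) dist_code C a.

Definition dist_class (C : {set vtx}) (i : nat) : {set vtx} :=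
  [set a | dist_code C a == i].

(* automorphisms of H(m,2): a coordinate permutation followed by a translation *)
Definition haut (s : {perm 'I_m}) (t : vtx) (x : vtx) : vtx :=
  symdiff (s @: x) t.

Definition in_aut (C : {set vtx}) (s : {perm 'I_m}) (t : vtx) : Prop :=
  haut s t @: C = C.

Definition completely_transitive (C : {set vtx}) : Prop :=
  forall i, i <= cov_radius C ->
  forall a b, a \in dist_class C i -> b \in dist_class C i ->
  exists s t, in_aut C s t /\ haut s t a = b.

Definition min_distance (C : {set vtx}) (d : nat) : Prop :=
  (exists c1 c2, [/\ c1 \in C, c2 \in C, c1 != c2 & hdist c1 c2 = d]) /\
  (forall c1 c2, c1 \in C -> c2 \in C -> c1 != c2 -> d <= hdist c1 c2).

Definition is_design (t k lambda : nat) (B : {set vtx}) : Prop :=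
  (forall b, b \in B -> #|b| = k) /\
  (forall T : vtx, #|T| = t -> #|[set b in B | T \subset b]| = lambda).

End Hamming.

From mathcomp Require Import all_boot all_fingroup order zify.
Import Order.TTheory.

Set Implicit Arguments. Unset Strict Implicit. Unset Printing Implicit Defensive.

(* Let d be the minimum distance and t = d/2 (rounded down), so t = 2 for
   d = 5 and t = 3 for d = 6.  Since 0 is a codeword and every other codeword
   has weight at least d >= 2t, every t-set T lies in C_t.  The codewords at
   distance d - t from T are the weight-d codewords containing T, plus 0 when
   d = 2t; an automorphism of C mapping T to T' preserves their number, and
   complete transitivity provides one.  For the bound: two distinct blocks through T meeting outside T
   would share t + 1 points and lie at distance at most 2d - 2t - 2 < d, so
   the sets b \ T are disjoint (d - t)-subsets of the complement of T. *)

Lemma trivIset_uniform_card (T : finType) (P : {set {set T}}) (A : {set T}) k :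
  trivIset P -> {in P, forall E : {set T}, #|E| = k} -> cover P \subset A ->
  #|P| * k <= #|A|.
Proof.
move=> /eqP tiP Pk /subset_leq_card; rewrite -tiP.
by rewrite (eq_bigr (fun=> k) Pk) sum_nat_const.
Qed.

Lemma subset_card_setI (T : finType) (A B : {set T}) :
  (A \subset B) = (#|A| <= #|A :&: B|).
Proof.
apply/setIidPl/idP => [-> // | le_A_AB].
by apply/eqP; rewrite eqEcard subsetIl le_A_AB.
Qed.

Section HammingSpace.
Variable m : nat.
Notation vtx := {set 'I_m}.

Lemma in_symdiff (i : 'I_m) (x y : vtx) :
  (i \in symdiff x y) = (i \in x) (+) (i \in y).
Proof. by rewrite !inE; case: (i \in x); case: (i \in y). Qed.

Lemma hdist_card (x y : vtx) : hdist x y + 2 * #|x :&: y| = #|x| + #|y|.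
Proof.
rewrite /hdist /symdiff cardsU.
have -> : (x :\: y) :&: (y :\: x) = set0.
  by apply/setP=> i; rewrite !inE; case: (i \in x); case: (i \in y).
have := cardsID y x; have := cardsID x y; rewrite cards0 (setIC y x); lia.
Qed.

Lemma hdist0r (x : vtx) : hdist x set0 = #|x|.
Proof. by have := hdist_card x set0; rewrite setI0 cards0; lia. Qed.

Lemma hdist_eq0 (x y : vtx) : (hdist x y == 0) = (x == y).
Proof.
rewrite /hdist cards_eq0; apply/eqP/eqP => [xy0 | ->]; last first.
  by rewrite /symdiff setDv setU0.
apply/setP=> i; have := in_set0 i; rewrite -xy0 in_symdiff.
by case: (i \in x); case: (i \in y).
Qed.

Lemma hdist_le (x y : vtx) : hdist x y <= m.
Proof. by rewrite -{2}[m]card_ord max_card. Qed.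

Lemma hdist_haut s t (a b : vtx) : hdist (haut s t a) (haut s t b) = hdist a b.
Proof.
have in_perm (X : vtx) i : (i \in s @: X) = ((s^-1)%g i \in X).
  by rewrite -{1}(permKV s i) mem_imset //; apply: perm_inj.
rewrite /hdist; have -> : symdiff (haut s t a) (haut s t b) = s @: symdiff a b.
  apply/setP=> i; rewrite !in_symdiff !in_perm in_symdiff.
  by case: (_ \in a); case: (_ \in b); case: (i \in t).
by rewrite card_imset //; apply: perm_inj.
Qed.

Lemma haut_inj s t : injective (@haut m s t).
Proof.
move=> a b eq_ab; apply/eqP.
by rewrite -hdist_eq0 -(hdist_haut s t) eq_ab hdist_eq0.
Qed.

Lemma dist_code_le (C : {set vtx}) a c : c \in C -> dist_code C a <= hdist a c.
Proof. exact: (@bigmin_le_cond _ nat _ m c (mem C) (hdist a)). Qed.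

Lemma dist_code_ge (C : {set vtx}) a k :
  k <= m -> {in C, forall c, k <= hdist a c} -> k <= dist_code C a.
Proof. by move=> le_km le_kC; apply/(@bigmin_geP _ nat). Qed.

Definition code_sphere (C : {set vtx}) (x : vtx) (r : nat) : {set vtx} :=
  [set c in C | hdist x c == r].

Lemma code_sphere_haut (C : {set vtx}) s t x r : in_aut C s t ->
  code_sphere C (haut s t x) r = haut s t @: code_sphere C x r.
Proof.
move=> autC; apply/eqP; rewrite eqEsubset; apply/andP; split; apply/subsetP.
- move=> c; rewrite inE -{1}autC => /andP [/imsetP [c' Cc' ->] dist_r].
  by apply: imset_f; rewrite inE Cc' -(hdist_haut s t).
- move=> _ /imsetP [c /[!inE] /andP [Cc dist_r] ->].
  by rewrite hdist_haut dist_r -{1}autC imset_f.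
Qed.

Lemma card_code_sphere_ct (C : {set vtx}) a b r : completely_transitive C ->
  dist_code C a = dist_code C b -> #|code_sphere C a r| = #|code_sphere C b r|.
Proof.
move=> ctC ab_dist.
have [|||s [t [autC <-]]] := ctC (dist_code C a) _ a b.
- exact: leq_bigmax.
- by rewrite inE.
- by rewrite inE ab_dist.
by rewrite code_sphere_haut // card_imset //; apply: haut_inj.
Qed.

Definition min_words (C : {set vtx}) (d : nat) : {set vtx} :=
  [set c in C | weight c == d].

Definition blocks_through (B : {set vtx}) (T : vtx) : {set vtx} :=
  [set b in B | T \subset b].

Section MinimumWeightWords.
Variables (C : {set vtx}) (d : nat).
Hypotheses (C0 : set0 \in C) (Cd : min_distance C d).

Lemma min_distance_gt0 : 0 < d.
Proof.
have [c1 [c2 [_ _ c12 <-]]] := Cd.1.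
by rewrite lt0n hdist_eq0.
Qed.

Lemma min_distance_le : d <= m.
Proof. by have [c1 [c2 [_ _ _ <-]]] := Cd.1; apply: hdist_le. Qed.

Lemma min_weight (c : vtx) : c \in C -> c != set0 -> d <= #|c|.
Proof. by move=> Cc c_nz; rewrite -hdist0r (Cd.2 _ _ Cc C0 c_nz). Qed.

Lemma min_words_meet (b1 b2 : vtx) : b1 \in min_words C d -> b2 \in min_words C d ->
  b1 != b2 -> 2 * #|b1 :&: b2| <= d.
Proof.
rewrite !inE /weight => /andP [Cb1 /eqP b1d] /andP [Cb2 /eqP b2d] b12.
by have := Cd.2 _ _ Cb1 Cb2 b12; have := hdist_card b1 b2; lia.
Qed.

Lemma dist_code_small (T : vtx) : 2 * #|T| <= d -> dist_code C T = #|T|.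
Proof.
move=> small_T; apply/eqP; rewrite eqn_leq -{1}(hdist0r T) dist_code_le //.
rewrite dist_code_ge // => [|c Cc]; first by rewrite -hdist0r hdist_le.
have [-> | c_nz] := eqVneq c set0; first by rewrite hdist0r.
have := min_weight Cc c_nz; have := hdist_card T c.
have := (subset_leqif_cards (subsetIl T c)).1; lia.
Qed.

Lemma hdist_min_word (T c : vtx) : #|T| <= d -> c \in C -> c != set0 ->
  (hdist T c == d - #|T|) = (c \in min_words C d) && (T \subset c).
Proof.
move=> le_Td Cc c_nz; rewrite inE Cc andTb subset_card_setI /weight.
have := min_weight Cc c_nz; have := hdist_card T c.
have := (subset_leqif_cards (subsetIl T c)).1 => le_TcT dist_c wt_c.
by apply/eqP/andP => [? | [/eqP ? ?]]; first split; try apply/eqP; lia.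
Qed.

Lemma card_code_sphere_min_words (T : vtx) : #|T| <= d ->
  #|code_sphere C T (d - #|T|)| =
  (d == 2 * #|T|) + #|blocks_through (min_words C d) T|.
Proof.
move=> le_Td; rewrite (cardsD1 set0) inE C0 hdist0r.
congr (_ + _); first by apply/eqP/eqP; lia.
apply: eq_card => c; rewrite !inE.
have [-> | c_nz] /= := eqVneq c set0.
  by rewrite /weight cards0 eq_sym (negbTE (lt0n_neq0 min_distance_gt0)) andbF.
by case Cc: (c \in C); rewrite // hdist_min_word // inE Cc.
Qed.

Lemma card_blocks_through_const (T1 T2 : vtx) : completely_transitive C ->
  2 * #|T1| <= d -> #|T1| = #|T2| ->
  #|blocks_through (min_words C d) T1| = #|blocks_through (min_words C d) T2|.
Proof.
move=> ctC small_T1 T12.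
have le_T1d : #|T1| <= d by lia.
have dist_T12 : dist_code C T1 = dist_code C T2.
  by rewrite !dist_code_small -?T12.
have := card_code_sphere_ct (d - #|T1|) ctC dist_T12.
by rewrite {2}T12 !card_code_sphere_min_words -?T12 // T12 => /addnI.
Qed.

Lemma blocks_through_disjoint (T b1 b2 : vtx) : d < 2 * #|T| + 2 ->
  b1 \in blocks_through (min_words C d) T -> b2 \in blocks_through (min_words C d) T ->
  b1 != b2 -> [disjoint b1 :\: T & b2 :\: T].
Proof.
move=> large_T /setIdP [Bb1 sTb1] /setIdP [Bb2 sTb2] b12.
apply/pred0P => i /=; apply/negbTE/negP.
rewrite !inE => /andP [/andP [Ti b1i] /andP [_ b2i]].
have sub : i |: T \subset b1 :&: b2.
  by rewrite subUset sub1set !inE b1i b2i subsetI sTb1 sTb2.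
have := subset_leq_card sub; rewrite cardsU1 Ti.
by have := min_words_meet Bb1 Bb2 b12; lia.
Qed.

Lemma card_blocks_through_le (T : vtx) : d < 2 * #|T| + 2 ->
  #|blocks_through (min_words C d) T| * (d - #|T|) + #|T| <= m.
Proof.
move=> large_T; set S := blocks_through (min_words C d) T.
have S_T b : b \in S -> #|b| = d /\ T \subset b.
  by rewrite !inE /weight => /andP [/andP [_ /eqP ->] ->].
have inj_S : {in S &, injective (fun b => b :\: T)}.
  move=> b1 b2 /S_T [_ sTb1] /S_T [_ sTb2] /= eq_b12.
  by rewrite -(setID b1 T) -(setID b2 T) eq_b12 (setIidPr sTb1) (setIidPr sTb2).
have <- : #|[set b :\: T | b in S]| = #|S| by apply: card_in_imset.
suff : #|[set b :\: T | b in S]| * (d - #|T|) <= #|~: T|.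
  by have := cardsC T; rewrite card_ord; lia.
apply: trivIset_uniform_card.
- apply/trivIsetP => _ _ /imsetP [b1 Sb1 ->] /imsetP [b2 Sb2 ->] neq.
  by apply: blocks_through_disjoint => //; apply: contraNneq neq => ->.
- by move=> _ /imsetP [b /S_T [db sTb] ->]; rewrite cardsD (setIidPr sTb) db.
- apply/bigcupsP => _ /imsetP [b _ ->]; apply/subsetP => i.
  by rewrite !inE => /andP [].
Qed.

Theorem min_words_design t : completely_transitive C -> 2 * t <= d < 2 * t + 2 ->
  exists lambda, is_design t d lambda (min_words C d) /\ lambda * (d - t) + t <= m.
Proof.
move=> ctC /andP [small_t large_t].
have [T0 /[!inE] /eqP T0t] : exists T0, T0 \in [set T : vtx | #|T| == t].
  by apply/card_gt0P; rewrite card_draws card_ord bin_gt0; have := min_distance_le; lia.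
exists #|blocks_through (min_words C d) T0|; split; last first.
  by rewrite -T0t card_blocks_through_le ?T0t.
split=> [b | T Tt]; first by rewrite inE /weight => /andP [_ /eqP].
by apply: card_blocks_through_const; rewrite ?T0t ?Tt.
Qed.

End MinimumWeightWords.
End HammingSpace.

Theorem lemma2p11 (m : nat) (C : {set {set 'I_m}}) (delta : nat) :
  completely_transitive C ->
  set0 \in C ->
  min_distance C delta ->
  (delta = 5 \/ delta = 6) ->
  exists lambda : nat,
    let B := [set c in C | weight c == delta] in
    (delta = 5 /\ is_design 2 5 lambda B /\ 3 * lambda + 2 <= m) \/
    (delta = 6 /\ is_design 3 6 lambda B /\ 3 * lambda + 3 <= m).
Proof.
move=> ctC C0 Cd [] delta_eq; subst delta.
- have [lambda [design bound]] := min_words_design (t := 2) C0 Cd ctC erefl.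
  by exists lambda; left; rewrite mulnC.
- have [lambda [design bound]] := min_words_design (t := 3) C0 Cd ctC erefl.
  by exists lambda; right; rewrite mulnC.
Qed.
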